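(* Let $f:\Sigma^\ast\to\Sigma^\ast$ be a total rational function, let $\sim_R$ be a left congruence of finite index with $\sim_R\sqsubseteq\sim_{R_0}$, and let $L^R$ be the left automaton of the canonical bimachine $B^R$. Then $\sim_{L^0}\sqsubseteq\sim_{L^R}$, where $L^0=L^{R_0}$.
   Context: For words $u,v$, $u\wedge v$ denotes their longest common prefix, $\bigwedge X$ the longest common prefix of a nonempty set $X$, and $\lVert u,v\rVert=|u|+|v|-2|u\wedge v|$. The left syntactic congruence: $u\sim_{R_0}v$ iff for all $w$, $wu\in\mathrm{dom}(f)\Leftrightarrow wv\in\mathrm{dom}(f)$ and $\sup\{\lVert f(wu),f(wv)\rVert: wu\in\mathrm{dom}f\}<\infty$. For a left congruence $\sim_R$ of finite index finer than $\sim_{R_0}$, let $R=\Sigma^\ast/\sim_R$, $r_0=[\varepsilon]$, and for $r=[u]$, $\sigma r=[\sigma u]$ (this is the right automaton of $B^R$). For $r\in R$ and $u\in\Sigma^\ast$ put $\widehat f_r(u)=\bigwedge\{f(uv): v\in r, uv\in\mathrm{dom}(f)\}$ (defined when this set is nonempty). Define the right congruence $u\sim_{L^R}v$ iff for all $\sigma\in\Sigma$, $w\in\Sigma^\ast$, $r\in R$: $\widehat f_{\sigma r}(uw)^{-1}\widehat f_r(uw\sigma)=\widehat f_{\sigma r}(vw)^{-1}\widehat f_r(vw\sigma)$ and $\widehat f_{r_0}(uw)^{-1}f(uw)=\widehat f_{r_0}(vw)^{-1}f(vw)$, whenever these expressions are defined. $L^R$ is the deterministic left automaton $(\Sigma^\ast/\sim_{L^R},[\varepsilon],[u]\xrightarrow{\sigma}[u\sigma])$;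 it is the left automaton of a bimachine $B^R$ with right automaton $R$ defining $f$. $L^0$ denotes $L^{R_0}$ (taking $\sim_R=\sim_{R_0}$). For a deterministic automaton $A$ with initial state $q_0$, $u\sim_A v$ iff $A$ reaches the same states from $q_0$ on $u$ and on $v$ (so $\sim_{L^R}$ is the congruence defining $L^R$). $\sim_1\sqsubseteq\sim_2$ means $u\sim_1v\Rightarrow u\sim_2v$. *)

From mathcomp Require Import all_boot.
From Stdlib Require Import ClassicalEpsilon.
Set Implicit Arguments. Unset Strict Implicit. Unset Printing Implicit Defensive.

Section Words.
Variable S : finType.

Fixpoint lcp2 (u v : seq S) : seq S :=
  match u, v with
  | a :: u', b :: v' => if a == b then a :: lcp2 u' v' else [::]
  | _, _ => [::]
  end.

Definition wdist (u v : seq S) : nat := size u + size v - 2 * size (lcp2 u v).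

Definition is_prefix (p y : seq S) : Prop := exists z, y = p ++ z.

Definition is_lcp (P : seq S -> Prop) (p : seq S) : Prop :=
  (forall y, P y -> is_prefix p y) /\
  (forall q, (forall y, P y -> is_prefix q y) -> is_prefix q p).

Definition bigwedge (P : seq S -> Prop) : seq S :=
  epsilon (inhabits [::]) (is_lcp P).

Definition lquot (a b : seq S) : option (seq S) :=
  if take (size a) b == a then Some (drop (size a) b) else None.

(** Nondeterministic real-time finite transducers with final outputs,
    states 'I_n. A transition (p, a, w, q) reads letter a, outputs w. *)
Record transducer := Transducer {
  tn : nat;
  tinit : seq 'I_tn;
  ttrans : seq ('I_tn * S * seq S * 'I_tn);
  tfinal : seq ('I_tn * seq S) }.

Inductive trun (T : transducer) : 'I_(tn T) -> seq S -> seq S -> 'I_(tn T) -> Prop :=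
  | trun_nil p : trun p [::] [::] p
  | trun_cons p a w q u y r :
      (p, a, w, q) \in ttrans T -> trun q u y r -> trun p (a :: u) (w ++ y) r.

Definition taccepts (T : transducer) (u y : seq S) : Prop :=
  exists p q y1 yf, p \in tinit T /\ trun p u y1 q /\ (q, yf) \in tfinal T
                    /\ y = y1 ++ yf.

Definition total_rational (f : seq S -> seq S) : Prop :=
  exists T : transducer, forall u y, taccepts T u y <-> y = f u.

Variable f : seq S -> seq S.

(** left syntactic congruence ~R0 (f total, so the domain conditions are trivial) *)
Definition simR0 (u v : seq S) : Prop :=
  exists B : nat, forall w, wdist (f (w ++ u)) (f (w ++ v)) <= B.

Definition left_congruence_fi (R : seq S -> seq S -> Prop) : Prop :=
  (forall u, R u u) /\ (forall u v, R u v -> R v u) /\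
  (forall u v w, R u v -> R v w -> R u w) /\
  (forall a u v, R u v -> R (a :: u) (a :: v)) /\
  (exists reps : seq (seq S), forall u, exists2 x, x \in reps & R u x).

(** hat f_r(u), with the class r = [x] given by a representative x *)
Definition hatf (R : seq S -> seq S -> Prop) (x u : seq S) : seq S :=
  bigwedge (fun y => exists v, R v x /\ y = f (u ++ v)).

(** the right congruence ~_{L^R}; r = [x], sigma r = [sigma x], r0 = [eps] *)
Definition simL (R : seq S -> seq S -> Prop) (u v : seq S) : Prop :=
  (forall (a : S) (w x : seq S),
      lquot (hatf R (a :: x) (u ++ w)) (hatf R x (u ++ w ++ [:: a])) =
      lquot (hatf R (a :: x) (v ++ w)) (hatf R x (v ++ w ++ [:: a]))) /\
  (forall w : seq S,
      lquot (hatf R [::] (u ++ w)) (f (u ++ w)) =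
      lquot (hatf R [::] (v ++ w)) (f (v ++ w))).

End Words.

(* If u ~L0 v, then for every x the words f(ux) and f(vx) factor as
   hat f_[x](u) z and hat f_[x](v) z with a common tail z (classes taken for
   ~R0): by induction on x, because the equations defining ~L0 say that
   appending a letter to u and to v adds the same output to both.  As the
   ~R-class of x lies inside its ~R0-class, the longest common prefixes over
   it are again hat f_[x](u) t and hat f_[x](v) t for a single t, and the
   left quotients defining ~L^R cancel the differing prefixes. *)
From mathcomp Require Import all_boot zify.
From Stdlib Require Import Classical ClassicalEpsilon.

Set Implicit Arguments.
Unset Strict Implicit.
Unset Printing Implicit Defensive.

Section LongestCommonPrefix.
Variable S : finType.
Implicit Types (P : seq S -> Prop) (p q c y z : seq S).

Lemma is_prefix_antisym p q : is_prefix p q -> is_prefix q p -> p = q.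
Proof.
move=> [z Ez] [z' Ez'].
have /eqP : size z = 0.
  by move: (congr1 size Ez) (congr1 size Ez'); rewrite !size_cat; lia.
by rewrite size_eq0 Ez => /eqP ->; rewrite cats0.
Qed.

Lemma is_prefix_cat q c z :
  is_prefix q (c ++ z) -> is_prefix q c \/ exists q', q = c ++ q'.
Proof.
elim: c q => [|a c IH] q; first by right; exists q.
case: q => [|b q] /=; first by left; exists (a :: c).
move=> [t [-> Et]].
have [[s ->]|[q' ->]] := IH q (ex_intro _ t Et).
  by left; exists s.
by right; exists q'.
Qed.

Lemma is_lcp_unique P p q : is_lcp P p -> is_lcp P q -> p = q.
Proof.
by move=> [Pp pmax] [Pq qmax]; apply: is_prefix_antisym; [apply: qmax | apply: pmax].
Qed.

Lemma is_lcp_ext P P' p : is_lcp P p -> (forall y, P y <-> P' y) -> is_lcp P' p.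
Proof.
move=> [Pp pmax] PP'; split=> [y /PP'|q Pq]; first exact: Pp.
by apply: pmax => y /PP'; apply: Pq.
Qed.

Lemma is_lcp_exists P y0 : P y0 -> exists p, is_lcp P p.
Proof.
elim: y0 P => [|a y0 IH] P Py0.
  exists [::]; split=> [y _|q Pq]; [by exists y | exact: Pq _ Py0].
have [startsa|] := classic (forall y, P y -> exists y', y = a :: y').
  have [p [Pp pmax]] := IH (fun y => P (a :: y)) Py0.
  exists (a :: p); split=> [y Py|[|b q] Pq]; last 2 first.
  - by exists (a :: p).
  - have [z [ab _]] := Pq _ Py0; subst b.
    have [s ->] : is_prefix q p.
      by apply: pmax => y Py; have [z' [Ey]] := Pq _ Py; exists z'.
    by exists s.
  by have [y' Ey] := startsa y Py; subst y; have [z ->] := Pp y' Py; exists z.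
move=> /not_all_ex_not [y not_ya]; have [Py noa] := imply_to_and _ _ not_ya.
exists [::]; split=> [y' _|[|b q] Pq]; [by exists y' | by exists [::] |].
have [z [ab _]] := Pq _ Py0; subst b.
by have [z' Ez'] := Pq _ Py; case: noa; exists (q ++ z').
Qed.

Lemma is_lcp_bigwedge P y0 : P y0 -> is_lcp P (bigwedge P).
Proof. by move=> Py0; apply: epsilon_spec; apply: is_lcp_exists Py0. Qed.

Lemma bigwedgeE P p y0 : P y0 -> is_lcp P p -> bigwedge P = p.
Proof. by move=> Py0; apply: is_lcp_unique; apply: is_lcp_bigwedge Py0. Qed.

Lemma is_lcp_catl P p c z0 : P z0 -> is_lcp P p ->
  is_lcp (fun y => exists z, P z /\ y = c ++ z) (c ++ p).
Proof.
move=> Pz0 [Pp pmax]; split=> [_ [z [Pz ->]]|q Pq].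
  by have [t ->] := Pp z Pz; exists t; rewrite catA.
have [[t ->]|[q' Eq]] := is_prefix_cat (Pq _ (ex_intro _ z0 (conj Pz0 erefl)));
  last subst q.
  by exists (t ++ p); rewrite catA.
have [s ->] : is_prefix q' p.
  apply: pmax => y Py; have [t] := Pq _ (ex_intro _ y (conj Py erefl)).
  by move=> /eqP; rewrite -catA eqseq_cat // eqxx => /eqP ->; exists t.
by exists s; rewrite catA.
Qed.

End LongestCommonPrefix.

Section LeftQuotient.
Variable S : finType.
Implicit Types a b c : seq S.

Lemma lquot_catl c a b : lquot (c ++ a) (c ++ b) = lquot a b.
Proof. by elim: c => //= x c; rewrite /lquot /= eqseq_cons eqxx. Qed.

Lemma lquot_cat a b : lquot a (a ++ b) = Some b.
Proof. by rewrite /lquot take_size_cat // drop_size_cat // eqxx. Qed.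

Lemma lquot_Some a b c : lquot a b = Some c -> b = a ++ c.
Proof.
by rewrite /lquot; case: eqP => // Ea [<-]; rewrite -{1}(cat_take_drop (size a) b) Ea.
Qed.

End LeftQuotient.

Section WordDistance.
Variable S : finType.
Implicit Types a b c : seq S.

Lemma lcp2C a b : lcp2 a b = lcp2 b a.
Proof.
elim: a b => [|x a IH] [|y b] //=; rewrite eq_sym.
by case: eqP => [->|]; rewrite ?IH.
Qed.

Lemma lcp2_id a : lcp2 a a = a.
Proof. by elim: a => //= x a ->; rewrite eqxx. Qed.

Lemma size_lcp2_le a b : size (lcp2 a b) <= minn (size a) (size b).
Proof.
elim: a b => [|x a IH] [|y b] //=; case: eqP => _ //=.
by have := IH b; rewrite minnSS.
Qed.

Lemma size_lcp2_min a b c :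
  minn (size (lcp2 a b)) (size (lcp2 b c)) <= size (lcp2 a c).
Proof.
elim: a b c => [|x a IH] [|y b] [|z c] //=; rewrite ?minn0 ?min0n //.
case: (x =P y) => [<-|_] /=; last by rewrite min0n.
case: (x == z) => /=; last by rewrite minn0.
by rewrite minnSS ltnS.
Qed.

Lemma wdistC a b : wdist a b = wdist b a.
Proof. by rewrite /wdist lcp2C addnC. Qed.

Lemma wdist_triangle a b c : wdist a c <= wdist a b + wdist b c.
Proof.
rewrite /wdist; have := size_lcp2_min a b c.
have := size_lcp2_le a b; have := size_lcp2_le b c; have := size_lcp2_le a c.
lia.
Qed.

Variable f : seq S -> seq S.

Lemma simR0_refl u : simR0 f u u.
Proof. by exists 0 => w; rewrite /wdist lcp2_id; lia. Qed.

Lemma simR0_sym u v : simR0 f u v -> simR0 f v u.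
Proof. by move=> [B HB]; exists B => w; rewrite wdistC. Qed.

Lemma simR0_trans u v w : simR0 f u v -> simR0 f v w -> simR0 f u w.
Proof.
move=> [B1 H1] [B2 H2]; exists (B1 + B2) => x.
exact: leq_trans (wdist_triangle _ (f (x ++ v)) _) (leq_add (H1 x) (H2 x)).
Qed.

Lemma simR0_cons (a : S) u v : simR0 f u v -> simR0 f (a :: u) (a :: v).
Proof. by move=> [B HB]; exists B => w; have := HB (w ++ [:: a]); rewrite -!catA. Qed.

End WordDistance.

Section HatF.
Variables (S : finType) (f : seq S -> seq S) (R : seq S -> seq S -> Prop).

Lemma is_lcp_hatf x p : R x x ->
  is_lcp (fun y => exists v, R v x /\ y = f (p ++ v)) (hatf f R x p).
Proof. by move=> Rxx; apply: (is_lcp_bigwedge (y0 := f (p ++ x))); exists x. Qed.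

Lemma hatf_eq_cat x w c (T : seq S -> Prop) : R x x ->
  (forall v, R v x -> exists2 z, T z & f (w ++ v) = c ++ z) ->
  (forall z, T z -> exists2 v, R v x & f (w ++ v) = c ++ z) ->
  hatf f R x w = c ++ bigwedge T.
Proof.
move=> Rxx RT TR; have [z0 Tz0 _] := RT x Rxx.
apply: (bigwedgeE (y0 := f (w ++ x))); first by exists x.
apply: (is_lcp_ext (is_lcp_catl c Tz0 (is_lcp_bigwedge Tz0))) => y; split.
  by move=> [z [/TR [v Rv Ev] ->]]; exists v; rewrite Ev.
by move=> [v [/RT [z Tz Ez] ->]]; exists z.
Qed.

Lemma simL_catr u v w : simL f R u v -> simL f R (u ++ w) (v ++ w).
Proof.
move=> [Hstep Hfinal]; split=> [a w' x|w'].
  by have := Hstep a (w ++ w') x; rewrite -!catA.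
by have := Hfinal (w ++ w'); rewrite -!catA.
Qed.

Lemma simL_step u v (a : S) x t : simL f R u v ->
  hatf f R x (u ++ [:: a]) = hatf f R (a :: x) u ++ t ->
  hatf f R x (v ++ [:: a]) = hatf f R (a :: x) v ++ t.
Proof.
by move=> uv Eu; have := uv.1 a [::] x; rewrite cat0s !cats0 Eu lquot_cat => /esym/lquot_Some.
Qed.

End HatF.

Section Refinement.
Variables (S : finType) (f : seq S -> seq S) (Q : seq S -> seq S -> Prop).
Hypotheses (Q_refl : forall u, Q u u) (Q_sym : forall u v, Q u v -> Q v u).
Hypothesis Q_trans : forall u v w, Q u v -> Q v w -> Q u w.
Hypothesis Q_cons : forall (a : S) u v, Q u v -> Q (a :: u) (a :: v).

Lemma hatf_class x v p : Q v x -> hatf f Q v p = hatf f Q x p.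
Proof.
move=> Qvx; apply: (bigwedgeE (y0 := f (p ++ v))); first by exists v.
apply: (is_lcp_ext (is_lcp_hatf f p (Q_refl x))) => y.
split=> -[v' [Qv' ->]]; exists v'; split=> //; first exact: Q_trans Qv' (Q_sym Qvx).
exact: Q_trans Qv' Qvx.
Qed.

Lemma hatf_cons_prefix (a : S) x p :
  is_prefix (hatf f Q (a :: x) p) (hatf f Q x (p ++ [:: a])).
Proof.
apply: (is_lcp_hatf f _ (Q_refl x)).2 => _ [v [Qvx ->]].
apply: (is_lcp_hatf f _ (Q_refl (a :: x))).1.
by exists (a :: v); split; [exact: Q_cons | rewrite -catA].
Qed.

Lemma simL_common_tail u v : simL f Q u v -> forall x, exists z,
  f (u ++ x) = hatf f Q x u ++ z /\ f (v ++ x) = hatf f Q x v ++ z.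
Proof.
move=> uv x; elim: x u v uv => [|a x IH] u v uv.
  have [z Ez] := (is_lcp_hatf f u (Q_refl [::])).1 (f (u ++ [::]))
    (ex_intro _ [::] (conj (Q_refl _) erefl)).
  exists z; split=> //; apply: lquot_Some.
  by have := uv.2 [::]; rewrite !cats0 in Ez *; rewrite Ez lquot_cat => <-.
have [z [Euz Evz]] := IH _ _ (simL_catr [:: a] uv).
have [t Eu] := hatf_cons_prefix a x u.
rewrite -!catA in Euz Evz.
by exists (t ++ z); rewrite Euz Evz Eu (simL_step uv Eu) -!catA.
Qed.

Variable R : seq S -> seq S -> Prop.
Hypotheses (R_refl : forall u, R u u) (R_subQ : forall u v, R u v -> Q u v).

Lemma hatf_common_tail u v : simL f Q u v -> forall x, exists t,
  hatf f R x u = hatf f Q x u ++ t /\ hatf f R x v = hatf f Q x v ++ t.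
Proof.
move=> uv x.
pose T z := exists2 v', R v' x &
  f (u ++ v') = hatf f Q x u ++ z /\ f (v ++ v') = hatf f Q x v ++ z.
have RT v' : R v' x -> exists2 z, T z &
  f (u ++ v') = hatf f Q x u ++ z /\ f (v ++ v') = hatf f Q x v ++ z.
  move=> Rv'x; have [z Ez] := simL_common_tail uv v'.
  rewrite !(hatf_class _ (R_subQ Rv'x)) in Ez.
  by exists z => //; exists v'.
exists (bigwedge T); split; apply: hatf_eq_cat (R_refl x) _ _.
- by move=> v' /RT [z Tz [Eu _]]; exists z.
- by move=> z [v' Rv' [Eu _]]; exists v'.
- by move=> v' /RT [z Tz [_ Ev]]; exists z.
- by move=> z [v' Rv' [_ Ev]]; exists v'.
Qed.

Theorem simL_refine u v : simL f Q u v -> simL f R u v.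
Proof.
move=> uv; split=> [a w x|w].
  have uwv := simL_catr w uv.
  have [t1 [Eu1 Ev1]] := hatf_common_tail uwv (a :: x).
  have [t2 [Eu2 Ev2]] := hatf_common_tail (simL_catr [:: a] uwv) x.
  have [t Eu] := hatf_cons_prefix a x (u ++ w).
  by rewrite !catA Eu1 Ev1 Eu2 Ev2 Eu (simL_step uwv Eu) -!catA !lquot_catl.
have [t [Eu Ev]] := hatf_common_tail (simL_catr w uv) [::].
have [z [Euz Evz]] := simL_common_tail (simL_catr w uv) [::].
by rewrite !cats0 in Euz Evz; rewrite Eu Ev Euz Evz !lquot_catl.
Qed.

End Refinement.

Theorem mainTheorem13 (S : finType) (f : seq S -> seq S)
  (R : seq S -> seq S -> Prop) :
  total_rational f ->
  left_congruence_fi R ->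
  (forall u v, R u v -> simR0 f u v) ->
  forall u v, simL f (simR0 f) u v -> simL f R u v.
Proof.
move=> _ [R_refl _] R_subR0.
apply: simL_refine R_refl R_subR0.
- exact: simR0_refl.
- exact: simR0_sym.
- exact: simR0_trans.
- exact: simR0_cons.
Qed.
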